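(* Let $n\geq 2$ and let $\nu,\tilde\nu$ be real numbers with $\nu^2+\tilde\nu^2>0$. Then for any $z_0$, the h-sphere $S^{2n}\!\left(z_0;\dfrac{\nu}{\nu^2+\tilde\nu^2},\dfrac{-\tilde\nu}{\nu^2+\tilde\nu^2}\right)$ in $(\mathbb{R}^{2n+2},g,J)$ has constant totally real sectional curvatures $\nu$ and $\tilde\nu$.
   Context: On $\mathbb{R}^{2n+2}$ with points $Z=(x^1,\dots,x^{n+1};y^1,\dots,y^{n+1})$, let $J(x;y)=(y;-x)$, $g(Z,W)=\sum_k x_Z^kx_W^k-\sum_k y_Z^ky_W^k$, $\tilde g(Z,W)=g(JZ,W)$; this is a flat Kähler manifold with Norden metric. For $z_0$ with position vector $Z_0$ and $(a,b)\neq(0,0)$, the h-sphere is $S^{2n}(z_0;a,b)=\{Z: g(Z-Z_0,Z-Z_0)=a,\ \tilde g(Z-Z_0,Z-Z_0)=b\}$, a $2n$-dimensional submanifold with $J$-invariant tangent spaces on which $g$ is nondegenerate; it carries the induced metric and its Levi-Civita connection $\nabla$. Curvature: $R(X,Y)Z=\nabla_X\nabla_YZ-\nabla_Y\nabla_XZ-\nabla_{[X,Y]}Z$, $R(x,y,z,u)=g(R(x,y)z,u)$, $\tilde R(x,y,z,u)=R(x,y,z,Ju)$, $\pi_1(x,y,z,u)=g(y,z)g(x,u)-g(x,z)g(y,u)$; for a $g$-nondegenerate 2-plane $\beta$ with basis $x,y$, $K(\beta;p)=R(x,y,y,x)/\pi_1(x,y,y,x)$, $\tilde K(\beta;p)=\tilde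 R(x,y,y,x)/\pi_1(x,y,y,x)$; $\beta$ is totally real if $\beta\neq J\beta$, $\beta\perp_gJ\beta$. Constant totally real sectional curvatures $\nu,\tilde\nu$ means $K(\beta;p)=\nu$, $\tilde K(\beta;p)=\tilde\nu$ for all $p$ and all nondegenerate totally real $\beta\subset T_p$. *)

From HB Require Import structures.
From mathcomp Require Import all_boot all_order all_algebra.
From mathcomp Require Import all_classical all_reals all_analysis.
Set Implicit Arguments. Unset Strict Implicit. Unset Printing Implicit Defensive.
Import Order.TTheory GRing.Theory Num.Theory.
Import numFieldNormedType.Exports.
Local Open Scope classical_set_scope.
Local Open Scope ring_scope.

Section HSphere.
Variables (R : realType) (n : nat).

(* R^{2n+2}: a point Z = (x^1..x^{n+1}; y^1..y^{n+1}) is a row vector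
   whose left block (size n+1) is x and right block (size n+1) is y. *)
Definition pt := 'rV[R]_(n.+1 + n.+1).

Definition Jop (Z : pt) : pt := row_mx (rsubmx Z) (- lsubmx Z).

Definition gN (Z W : pt) : R :=
  \sum_(k < n.+1) lsubmx Z 0 k * lsubmx W 0 k
  - \sum_(k < n.+1) rsubmx Z 0 k * rsubmx W 0 k.
Definition gtN (Z W : pt) : R := gN (Jop Z) W.

Definition hsphere (Z0 : pt) (a b : R) : set pt :=
  [set Z | gN (Z - Z0) (Z - Z0) = a /\ gtN (Z - Z0) (Z - Z0) = b].

(* tangent space at p of the h-sphere centered at Z0: kernel of the
   differential of Z |-> (g(Z-Z0,Z-Z0), g~(Z-Z0,Z-Z0)) *)
Definition tangentv (Z0 p v : pt) : Prop :=
  gN (p - Z0) v = 0 /\ gN (Jop (p - Z0)) v = 0.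

(* g-orthogonal projection onto the tangent space at p, i.e. w minus its
   g-orthogonal component on the normal plane span(p-Z0, J(p-Z0)).
   With P = p-Z0, a = g(P,P), b = g(JP,P) (so g(JP,JP) = -a). *)
Definition tanproj (Z0 p w : pt) : pt :=
  let P := p - Z0 in
  let a := gN P P in
  let b := gN (Jop P) P in
  let gP := gN w P in
  let gJ := gN w (Jop P) in
  w - (((a * gP + b * gJ) / (a ^+ 2 + b ^+ 2)) *: P
       + ((b * gP - a * gJ) / (a ^+ 2 + b ^+ 2)) *: Jop P).

Fixpoint iterD (vs : seq pt) (f : pt -> pt) : pt -> pt :=
  match vs with
  | [::] => f
  | v :: vs' => fun q => derive (iterD vs' f) q v
  end.
Definition smooth_field (f : pt -> pt) : Prop :=
  forall (vs : seq pt) (q : pt), differentiable (iterD vs f) q.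

Definition tangent_field (Z0 : pt) (a b : R) (X : pt -> pt) : Prop :=
  smooth_field X /\ forall p, hsphere Z0 a b p -> tangentv Z0 p (X p).

(* induced Levi-Civita connection (Gauss formula): tangential part of the
   flat ambient derivative *)
Definition nabla (Z0 : pt) (X Y : pt -> pt) : pt -> pt :=
  fun p => tanproj Z0 p (derive Y p (X p)).

Definition lieb (X Y : pt -> pt) : pt -> pt :=
  fun p => derive Y p (X p) - derive X p (Y p).

Definition curv (Z0 : pt) (X Y Z : pt -> pt) : pt -> pt :=
  fun p => nabla Z0 X (nabla Z0 Y Z) p - nabla Z0 Y (nabla Z0 X Z) p
           - nabla Z0 (lieb X Y) Z p.

Definition pi1 (x y : pt) : R := gN y y * gN x x - gN x y * gN y x.

Definition in_span2 (x y v : pt) : Prop := exists c d : R, v = c *: x + d *: y.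
Definition totally_real (x y : pt) : Prop :=
  ~ (in_span2 x y (Jop x) /\ in_span2 x y (Jop y)) /\
  gN x (Jop x) = 0 /\ gN x (Jop y) = 0 /\ gN y (Jop x) = 0 /\ gN y (Jop y) = 0.

(* The h-sphere has constant totally real sectional curvatures nu, nut:
   for every p on it and every nondegenerate totally real 2-plane with basis
   x, y in T_p, K = R(x,y,y,x)/pi1 = nu and K~ = R(x,y,y,Jx)/pi1 = nut.
   R(x,y)y at p is computed from any tangent fields X, Y extending x, y. *)
Definition const_totally_real_curv (Z0 : pt) (a b nu nut : R) : Prop :=
  forall (p x y : pt), hsphere Z0 a b p ->
    tangentv Z0 p x -> tangentv Z0 p y ->
    pi1 x y != 0 -> totally_real x y ->
    forall X Y : pt -> pt, tangent_field Z0 a b X -> tangent_field Z0 a b Y ->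
      X p = x -> Y p = y ->
      gN (curv Z0 X Y Y p) x / pi1 x y = nu /\
      gN (curv Z0 X Y Y p) (Jop x) / pi1 x y = nut.

End HSphere.

From HB Require Import structures.
From mathcomp Require Import all_boot all_order all_algebra.
From mathcomp Require Import all_classical all_reals all_analysis.
From mathcomp Require Import ring lra.
Import Order.TTheory GRing.Theory Num.Theory.
Import numFieldNormedType.Exports.
Local Open Scope ring_scope.
Set Implicit Arguments. Unset Strict Implicit. Unset Printing Implicit Defensive.

(* At p on the h-sphere, P = p - z0 and JP span the g-normal plane, with
   g(P,P) = a and g(JP,P) = b.  Differentiating g(Y,P) = 0 and g(Y,JP) = 0
   along the sphere gives the second fundamental form,
   g(D_x Y, P) = -g(y,x) and g(D_x Y, JP) = -g(y,Jx), and the Gauss equation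
   expresses g(R(x,y)y, t) through these normal components.  On a totally
   real plane every J-term vanishes, leaving R(x,y,y,x) = a/(a^2+b^2) pi1 and
   R(x,y,y,Jx) = -b/(a^2+b^2) pi1, which are nu and nut for the given a, b.
   Two analytic facts are needed: symmetry of second derivatives of smooth
   fields, and the vanishing along tangent vectors of the derivative of a
   function that vanishes on the h-sphere, proved with a curve on the sphere
   of prescribed velocity. *)

Section NordenForm.
Variables (R : realType) (n : nat).
Local Notation V := (pt R n).
Implicit Types Z W U : V.

Lemma gN_sum Z W : gN Z W = \sum_(k < n.+1)
  (Z 0 (lshift _ k) * W 0 (lshift _ k) - Z 0 (rshift _ k) * W 0 (rshift _ k)).
Proof. by rewrite /gN sumrB; congr (_ - _); apply: eq_bigr => k _; rewrite !mxE. Qed.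

Lemma Jop_lshift Z k : Jop Z 0 (lshift _ k) = Z 0 (rshift _ k).
Proof. by rewrite /Jop row_mxEl mxE. Qed.

Lemma Jop_rshift Z k : Jop Z 0 (rshift _ k) = - Z 0 (lshift _ k).
Proof. by rewrite /Jop row_mxEr !mxE. Qed.

Lemma gN_sym Z W : gN Z W = gN W Z.
Proof. by rewrite !gN_sum; apply: eq_bigr => k _; ring. Qed.

Lemma gNDl Z W U : gN (Z + W) U = gN Z U + gN W U.
Proof. by rewrite !gN_sum -big_split; apply: eq_bigr => k _; rewrite !mxE /=; ring. Qed.

Lemma gNZl c Z W : gN (c *: Z) W = c * gN Z W.
Proof. by rewrite !gN_sum mulr_sumr; apply: eq_bigr => k _; rewrite !mxE; ring. Qed.

Lemma gNNl Z W : gN (- Z) W = - gN Z W.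
Proof. by rewrite -scaleN1r gNZl mulN1r. Qed.

Lemma gNBl Z W U : gN (Z - W) U = gN Z U - gN W U.
Proof. by rewrite gNDl gNNl. Qed.

Lemma gNDr Z W U : gN U (Z + W) = gN U Z + gN U W.
Proof. by rewrite !(gN_sym U) gNDl. Qed.

Lemma gNZr c Z W : gN W (c *: Z) = c * gN W Z.
Proof. by rewrite !(gN_sym W) gNZl. Qed.

Lemma gNNr Z W : gN W (- Z) = - gN W Z.
Proof. by rewrite !(gN_sym W) gNNl. Qed.

Lemma gNBr Z W U : gN U (Z - W) = gN U Z - gN U W.
Proof. by rewrite gNDr gNNr. Qed.

Lemma gN_Jop Z W : gN (Jop Z) W = gN Z (Jop W).
Proof. by rewrite !gN_sum; apply: eq_bigr => k _; rewrite !Jop_lshift !Jop_rshift; ring. Qed.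

Lemma gN_JopJop Z W : gN (Jop Z) (Jop W) = - gN Z W.
Proof.
by rewrite !gN_sum -sumrN; apply: eq_bigr => k _; rewrite !Jop_lshift !Jop_rshift; ring.
Qed.

Lemma JopD Z W : Jop (Z + W) = Jop Z + Jop W.
Proof. by rewrite /Jop !linearD /= add_row_mx. Qed.

Lemma JopZ c Z : Jop (c *: Z) = c *: Jop Z.
Proof. by rewrite /Jop !linearZ /= scale_row_mx scalerN. Qed.

Lemma JopN Z : Jop (- Z) = - Jop Z.
Proof. by rewrite -scaleN1r JopZ scaleN1r. Qed.

Lemma JopB Z W : Jop (Z - W) = Jop Z - Jop W.
Proof. by rewrite JopD JopN. Qed.

Lemma JopK Z : Jop (Jop Z) = - Z.
Proof. by rewrite /Jop row_mxKl row_mxKr -opp_row_mx hsubmxK. Qed.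

Lemma tangentv_Jop Z0 p v : tangentv Z0 p v -> tangentv Z0 p (Jop v).
Proof. by case=> h1 h2; split; [rewrite -gN_Jop | rewrite gN_JopJop h1 oppr0]. Qed.

End NordenForm.

Section DirectionalDerivative.
Variables (R : realType) (U W : normedModType R).
Implicit Types (a v : U) (f g : U -> W).

Lemma is_derive_ext a v f g df : f =1 g -> is_derive a v f df -> is_derive a v g df.
Proof. by move=> /funext ->. Qed.

Lemma is_derive_val a v f df : is_derive a v f df -> 'D_v f a = df.
Proof. by case. Qed.

Lemma differentiable_is_derive f a v :
  differentiable f a -> is_derive a v f ('D_v f a).
Proof. by move=> df; apply: derivableP; apply: diff_derivable. Qed.

End DirectionalDerivative.

Lemma is_derive_subr (R : realType) (U : normedModType R) (a v c : U) :
  is_derive a v (fun q => q - c) v.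
Proof.
have H := is_deriveB (is_derive_id a v) (is_derive_cst c a v).
by rewrite subr0 in H; exact: is_derive_ext (fun=> erefl) H.
Qed.

Lemma differentiable_subr (R : realType) (U : normedModType R) (a c : U) :
  differentiable (fun q => q - c) a.
Proof.
have did : differentiable (id : U -> U) a by exact: ex_diff.
exact: differentiableB did (differentiable_cst c a).
Qed.

Section MatrixDerivative.
Variables (R : realType) (U : normedModType R) (m k : nat).
Implicit Types (a v : U) (F : U -> 'M[R]_(m, k)) (dF : 'M[R]_(m, k)).

Lemma is_derive_entry a v F dF i j :
  is_derive a v F dF -> is_derive a v (fun q => F q i j) (dF i j).
Proof.
move=> [d1 d2]; split; first exact: (derivable_mxP F a v).1.
by rewrite -d2 derive_mx // mxE.
Qed.

Lemma is_derive_mx a v F dF :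
  (forall i j, is_derive a v (fun q => F q i j) (dF i j)) -> is_derive a v F dF.
Proof.
move=> H; have dF1 : derivable F a v.
  by apply/(derivable_mxP F a v) => i j; case: (H i j).
split => //; rewrite derive_mx //; apply/matrixP => i j; rewrite mxE.
by case: (H i j).
Qed.

Lemma is_derive_scale a v (c : U -> R) dc F dF :
  is_derive a v c dc -> is_derive a v F dF ->
  is_derive a v (fun q => c q *: F q) (dc *: F a + c a *: dF).
Proof.
move=> Hc HF; apply: is_derive_mx => i j.
apply: (@is_derive_ext _ _ _ _ _ (fun q => c q * F q i j)); first by move=> q; rewrite mxE.
rewrite (_ : _ i j = c a *: dF i j + F a i j *: dc); last first.
  by rewrite !mxE /= addrC [dc * _]mulrC.
by apply: is_deriveM => //; apply: is_derive_entry.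
Qed.

Lemma differentiable_entry F q i j : differentiable F q ->
  differentiable (fun q => F q i j) q.
Proof.
move=> dF; apply: (@differentiable_comp _ _ _ _ F (fun N : 'M[R]_(m, k) => N i j)) => //.
exact: differentiable_coord.
Qed.

End MatrixDerivative.

Section NordenFormDerivative.
Variables (R : realType) (U : normedModType R) (n : nat).
Implicit Types (a v : U) (F G : U -> pt R n).

Lemma is_derive_gN a v F G dF dG :
  is_derive a v F dF -> is_derive a v G dG ->
  is_derive a v (fun q => gN (F q) (G q)) (gN dF (G a) + gN (F a) dG).
Proof.
move=> HF HG.
have Hsum := is_derive_sum (fun k => is_deriveB
  (is_deriveM (is_derive_entry 0 (lshift _ k) HF) (is_derive_entry 0 (lshift _ k) HG))
  (is_deriveM (is_derive_entry 0 (rshift _ k) HF) (is_derive_entry 0 (rshift _ k) HG))).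
apply: (is_derive_ext _ (is_derive_eq Hsum _)).
  by move=> q; rewrite fct_sumE gN_sum.
by rewrite !gN_sum -big_split; apply: eq_bigr => k _ /=; rewrite /GRing.scale /=; ring.
Qed.

Lemma derivable_gN a v F G dF dG : is_derive a v F dF -> is_derive a v G dG ->
  derivable (fun q => gN (F q) (G q)) a v.
Proof. by move=> HF HG; case: (is_derive_gN HF HG). Qed.

Lemma is_derive_Jop a v F dF :
  is_derive a v F dF -> is_derive a v (fun q => Jop (F q)) (Jop dF).
Proof.
move=> HF; apply: is_derive_mx => i j; rewrite (ord1 i).
case: (splitP j) => k Hk.
- have -> : j = lshift _ k by apply/ord_inj.
  apply: (@is_derive_ext _ _ _ _ _ (fun q => F q 0 (rshift _ k))).
    by move=> q; rewrite Jop_lshift.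
  by rewrite Jop_lshift; apply: is_derive_entry.
- have -> : j = rshift _ k by apply/ord_inj.
  apply: (@is_derive_ext _ _ _ _ _ (fun q => - F q 0 (lshift _ k))).
    by move=> q; rewrite Jop_rshift.
  by rewrite Jop_rshift; apply: is_deriveN; apply: is_derive_entry.
Qed.

Lemma differentiable_gN F G p : differentiable F p -> differentiable G p ->
  differentiable (fun q => gN (F q) (G q)) p.
Proof.
move=> dF dG; rewrite (_ : (fun q => gN (F q) (G q)) = \sum_(k < n.+1) fun q =>
  (F q 0 (lshift _ k) * G q 0 (lshift _ k) - F q 0 (rshift _ k) * G q 0 (rshift _ k))).
  apply: differentiable_sum => k.
  by apply: differentiableB; apply: differentiableM; apply: differentiable_entry.
by rewrite fct_sumE; apply/funext => q; rewrite gN_sum.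
Qed.

Lemma differentiable_gN_Jop F G p : differentiable F p -> differentiable G p ->
  differentiable (fun q => gN (F q) (Jop (G q))) p.
Proof.
move=> dF dG; rewrite (_ : (fun q => gN (F q) (Jop (G q))) = \sum_(k < n.+1) fun q =>
  (F q 0 (lshift _ k) * G q 0 (rshift _ k) + F q 0 (rshift _ k) * G q 0 (lshift _ k))).
  apply: differentiable_sum => k.
  by apply: differentiableD; apply: differentiableM; apply: differentiable_entry.
rewrite fct_sumE; apply/funext => q; rewrite gN_sum.
by apply: eq_bigr => k _; rewrite Jop_lshift Jop_rshift; ring.
Qed.

End NordenFormDerivative.

Section Schwarz.
Variables (R : realType) (U : normedModType R).

Lemma continuous_at_ball (W : normedModType R) (H : U -> W) p e : 0 < e ->
  {for p, continuous H} ->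
  exists2 d : R, 0 < d & forall q, `|p - q| < d -> `|H p - H q| < e.
Proof.
move=> e0 Hc.
have Hn : \forall t \near p, `|H p - H t| < e by move/cvgrPdist_lt : Hc; apply.
have [d d0 Hd] := (nbhs_ballP _ _).1 Hn.
by exists d => // q hq; apply: Hd; rewrite -ball_normE.
Qed.

Lemma is_derive_line (W : normedModType R) (G : U -> W) c z s :
  derivable G (c + s *: z) z ->
  is_derive s 1 (fun t : R => G (c + t *: z)) ('D_z G (c + s *: z)).
Proof.
have E : (fun h : R => h^-1 *: (((fun t : R => G (c + t *: z)) \o shift s) (h *: 1)
            - G (c + s *: z))) =
         (fun h : R => h^-1 *: ((G \o shift (c + s *: z)) (h *: z) - G (c + s *: z))).
  apply/funext => h /=; congr (_ *: (G _ - _)).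
  by rewrite [h%:A]mulr1 scalerDl addrCA.
by move=> dG; split; [rewrite /derivable E | rewrite /derive E].
Qed.

Lemma MVT_from0 (g dg : R -> R) (h : R) :
  0 < h -> (forall s : R, is_derive s (1 : R) g (dg s)) ->
  exists2 c, 0 < c < h & g h - g 0 = dg c * h.
Proof.
move=> h0 Hg.
have gc : continuous g.
  by move=> x; apply/differentiable_continuous/derivable1_diffP; case: (Hg x).
have [c cin E] := MVT h0 (fun x _ => Hg x) (continuous_subspaceT gc).
by exists c; [move: cin; rewrite in_itv | rewrite E subr0].
Qed.

Lemma second_difference_MVT (F : U -> R) p u w h : 0 < h ->
  (forall q, differentiable F q) ->
  (forall q, differentiable (fun q => 'D_u F q) q) ->
  exists xi eta, [/\ 0 < xi < h, 0 < eta < h &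
    F (p + h *: w + h *: u) - F (p + h *: u) - F (p + h *: w) + F p =
    'D_w (fun q => 'D_u F q) (p + xi *: u + eta *: w) * (h * h)].
Proof.
move=> h0 dF dDF.
pose g s := F (p + h *: w + s *: u) - F (p + s *: u).
have [xi xih E1] : exists2 xi, 0 < xi < h &
    g h - g 0 = ('D_u F (p + h *: w + xi *: u) - 'D_u F (p + xi *: u)) * h.
  by apply: MVT_from0 => // s; apply: is_deriveB; apply: is_derive_line;
    exact: diff_derivable.
pose k t := 'D_u F (p + xi *: u + t *: w).
have [eta etah E2] : exists2 eta, 0 < eta < h &
    k h - k 0 = 'D_w (fun q => 'D_u F q) (p + xi *: u + eta *: w) * h.
  apply: MVT_from0 h0 _ => t.
  by rewrite /k; apply: is_derive_line; apply: diff_derivable.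
exists xi, eta; split => //.
rewrite mulrA -E2 /k scale0r addr0 [p + xi *: u + h *: w]addrAC -E1 /g !scale0r !addr0.
ring.
Qed.

(* Both orders of differentiation compute the same second difference, up to
   intermediate points that tend to [p] with [h]. *)
Lemma schwarz (F : U -> R) p u w :
  (forall q, differentiable F q) ->
  (forall z q, differentiable (fun q => 'D_z F q) q) ->
  {for p, continuous (fun q => 'D_w (fun q => 'D_u F q) q)} ->
  {for p, continuous (fun q => 'D_u (fun q => 'D_w F q) q)} ->
  'D_w (fun q => 'D_u F q) p = 'D_u (fun q => 'D_w F q) p.
Proof.
move=> dF dDF c1 c2.
set A := 'D_w _ p; set B := 'D_u _ p.
apply/eqP; apply/negPn/negP => AB.
have e0 : 0 < `|A - B| / 2 by rewrite divr_gt0 // normr_gt0 subr_eq0.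
have [d1 d10 H1] := continuous_at_ball e0 c1.
have [d2 d20 H2] := continuous_at_ball e0 c2.
pose d := Num.min d1 d2.
have d0 : 0 < d by rewrite lt_min d10 d20.
have dd1 : d <= d1 by rewrite ge_min lexx.
have dd2 : d <= d2 by rewrite ge_min lexx orbT.
pose h := d / (`|u| + `|w| + 1).
have uw0 : 0 < `|u| + `|w| + 1 by rewrite ltr_wpDl // addr_ge0.
have h0 : 0 < h by rewrite divr_gt0.
have close xi eta : 0 < xi < h -> 0 < eta < h -> `|p - (p + xi *: u + eta *: w)| < d.
  move=> /andP[x0 xh] /andP[y0 yh].
  rewrite opprD opprD addrA addrA subrr sub0r -opprD normrN.
  apply: (le_lt_trans (ler_normD _ _)); rewrite !normrZ !ger0_norm ?ltW //.
  apply: (@le_lt_trans _ _ (h * (`|u| + `|w|))).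
    by rewrite mulrDr; apply: lerD; apply: ler_wpM2r => //; apply: ltW.
  by rewrite /h -mulrA gtr_pMr // ltr_pdivrMl //; lra.
have [xi [eta [xin etan E]]] := second_difference_MVT p w h0 dF (dDF u).
have [xi' [eta' [xin' etan' E']]] := second_difference_MVT p u h0 dF (dDF w).
have hh : h * h != 0 by rewrite mulf_neq0 // gt_eqF.
have EQ : 'D_w (fun q => 'D_u F q) (p + xi *: u + eta *: w) =
          'D_u (fun q => 'D_w F q) (p + xi' *: w + eta' *: u).
  apply: (mulIf hh); apply: etrans (esym E) (etrans _ E').
  by rewrite [p + h *: u + h *: w]addrAC [_ - F (p + h *: u) - _]addrAC.
have L1 := H1 _ (lt_le_trans (close _ _ xin etan) dd1).
have L2 := H2 _ (lt_le_trans (close _ _ etan' xin') dd2).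
rewrite EQ in L1; rewrite [p + eta' *: u + xi' *: w]addrAC in L2.
move: L1 L2; set C := 'D_u _ (p + xi' *: w + eta' *: u) => L1 L2.
have : `|A - B| < `|A - B| / 2 + `|A - B| / 2.
  rewrite {1}(_ : A - B = (A - C) - (B - C)); last by rewrite opprB addrA subrK.
  exact: le_lt_trans (ler_normB _ _) (ltrD L1 L2).
by rewrite -splitr ltxx.
Qed.

End Schwarz.

Section SmoothSchwarz.
Variables (R : realType) (U : normedModType R) (m k : nat).
Implicit Types (G : U -> 'M[R]_(m, k)).

Lemma derive_entry G z i j : (forall q, differentiable G q) ->
  (fun q => 'D_z (fun q => G q i j) q) = (fun q => 'D_z G q i j).
Proof.
move=> dG; apply/funext => q.
exact: is_derive_val (is_derive_entry i j (differentiable_is_derive z (dG q))).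
Qed.

Lemma schwarz_mx G p u w :
  (forall q, differentiable G q) ->
  (forall z q, differentiable (fun q => 'D_z G q) q) ->
  (forall z1 z2 q, differentiable (fun q => 'D_z2 (fun q => 'D_z1 G q) q) q) ->
  'D_w (fun q => 'D_u G q) p = 'D_u (fun q => 'D_w G q) p.
Proof.
move=> d0 d1 d2; apply/matrixP => i j.
have E1 := is_derive_val (is_derive_entry i j (differentiable_is_derive w (d1 u p))).
have E2 := is_derive_val (is_derive_entry i j (differentiable_is_derive u (d1 w p))).
rewrite -[LHS]E1 -[RHS]E2 -[(fun q => 'D_u G q i j)](derive_entry _ _ _ d0).
rewrite -[(fun q => 'D_w G q i j)](derive_entry _ _ _ d0).
have DD z1 z2 :
    {for p, continuous (fun q => 'D_z2 (fun q => 'D_z1 (fun q => G q i j) q) q)}.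
  rewrite (derive_entry _ _ _ d0) (derive_entry _ _ _ (d1 z1)).
  exact/differentiable_continuous/differentiable_entry.
apply: schwarz; [|move=> z q; rewrite (derive_entry _ _ _ d0)|exact: DD|exact: DD].
  by move=> q; apply: differentiable_entry.
exact: differentiable_entry.
Qed.

End SmoothSchwarz.

Section SmoothField.
Variables (R : realType) (n : nat).
Local Notation V := (pt R n).
Variable Y : V -> V.
Hypothesis sY : smooth_field Y.

Lemma smooth_differentiable q : differentiable Y q.
Proof. exact: (sY [::] q). Qed.

Lemma smooth_differentiable1 z q : differentiable (fun q => 'D_z Y q) q.
Proof. exact: (sY [:: z] q). Qed.

Lemma smooth_schwarz p u w :
  'D_w (fun q => 'D_u Y q) p = 'D_u (fun q => 'D_w Y q) p.
Proof.
apply: schwarz_mx => [q|z q|z1 z2 q]; first exact: smooth_differentiable.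
  exact: smooth_differentiable1.
exact: (sY [:: z2; z1] q).
Qed.

Lemma derive_row_expansion (G : V -> V) q (z : V) : differentiable G q ->
  'D_z G q = \sum_(i < n.+1 + n.+1) z 0 i *: 'D_(delta_mx 0 i) G q.
Proof.
move=> dG; rewrite (deriveE _ dG) {1}(row_sum_delta z) linear_sum.
by apply: eq_bigr => i _; rewrite linearZ /= deriveE.
Qed.

Lemma is_derive_derive_along (X : V -> V) p u :
  (forall q, differentiable X q) ->
  is_derive p u (fun q => 'D_(X q) Y q)
    ('D_('D_u X p) Y p + 'D_(X p) (fun q => 'D_u Y q) p).
Proof.
move=> dX.
apply: (@is_derive_ext _ _ _ _ _ (fun q => \sum_(i < n.+1 + n.+1)
   X q 0 i *: 'D_(delta_mx 0 i) Y q)).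
  by move=> q; rewrite (derive_row_expansion (X q) (smooth_differentiable q)).
have Hsum := is_derive_sum (fun i => is_derive_scale
  (is_derive_entry 0 i (differentiable_is_derive u (dX p)))
  (differentiable_is_derive u (smooth_differentiable1 (delta_mx 0 i) p))).
apply: (is_derive_ext _ (is_derive_eq Hsum _)); first by move=> q; rewrite fct_sumE.
rewrite big_split /= -(derive_row_expansion _ (smooth_differentiable p)); congr (_ + _).
rewrite (derive_row_expansion (X p) (smooth_differentiable1 u p)).
by apply: eq_bigr => i _; rewrite smooth_schwarz.
Qed.

End SmoothField.

Lemma derivable_ncoord (R : realType) (U : normedModType R) (a b f g : U -> R) p v :
  derivable a p v -> derivable b p v -> derivable f p v -> derivable g p v ->
  a p ^+ 2 + b p ^+ 2 != 0 ->
  derivable (fun q => (a q * f q + b q * g q) / (a q ^+ 2 + b q ^+ 2)) p v /\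
  derivable (fun q => (b q * f q - a q * g q) / (a q ^+ 2 + b q ^+ 2)) p v.
Proof.
move=> da db df dg D0.
have sq (h : U -> R) : derivable h p v -> derivable (fun q => h q ^+ 2) p v.
  move=> dh; have -> : (fun q => h q ^+ 2) = h * h by apply/funext => q; rewrite expr2.
  exact: derivableM.
have dD : derivable (fun q => (a q ^+ 2 + b q ^+ 2)^-1) p v.
  apply: derivableV; first exact: D0.
  by apply: derivableD; [exact: sq da | exact: sq db].
split; (apply: derivableM; last exact: dD).
  by apply: derivableD; [exact: derivableM da df | exact: derivableM db dg].
by apply: derivableB; [exact: derivableM db df | exact: derivableM da dg].
Qed.

Section NormalProjection.
Variables (R : realType) (n : nat) (Z0 : pt R n).
Local Notation V := (pt R n).
Implicit Types p v w t : V.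

(* Coordinates of the g-orthogonal projection of [w] onto span(P, JP) in
   the basis (P, JP), where P = p - Z0. *)
Definition ncoord1 p w :=
  let P := p - Z0 in let a := gN P P in let b := gN (Jop P) P in
  (a * gN w P + b * gN w (Jop P)) / (a ^+ 2 + b ^+ 2).

Definition ncoord2 p w :=
  let P := p - Z0 in let a := gN P P in let b := gN (Jop P) P in
  (b * gN w P - a * gN w (Jop P)) / (a ^+ 2 + b ^+ 2).

Lemma tanprojE p w :
  tanproj Z0 p w = w - (ncoord1 p w *: (p - Z0) + ncoord2 p w *: Jop (p - Z0)).
Proof. by []. Qed.

Lemma gN_tanproj p w t : tangentv Z0 p t -> gN (tanproj Z0 p w) t = gN w t.
Proof. by case=> t1 t2; rewrite tanprojE gNBl gNDl !gNZl t1 t2 !mulr0 addr0 subr0. Qed.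

Lemma gN_normal_comb p t dW v d1 d2 c1 c2 : tangentv Z0 p t ->
  gN (dW - ((d1 *: (p - Z0) + c1 *: v) + (d2 *: Jop (p - Z0) + c2 *: Jop v))) t =
  gN dW t - (c1 * gN v t + c2 * gN (Jop v) t).
Proof. by case=> t1 t2; rewrite gNBl !gNDl !gNZl t1 t2 !mulr0 !add0r. Qed.

Lemma gN_derive_tanproj p v (W : V -> V) dW t :
  gN (p - Z0) (p - Z0) ^+ 2 + gN (Jop (p - Z0)) (p - Z0) ^+ 2 != 0 ->
  is_derive p v W dW -> tangentv Z0 p t ->
  gN ('D_v (fun q => tanproj Z0 q (W q)) p) t =
  gN dW t - (ncoord1 p (W p) * gN v t + ncoord2 p (W p) * gN (Jop v) t).
Proof.
move=> D0 HW tt.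
have dP := is_derive_subr p v Z0.
have dJP := is_derive_Jop dP.
have [dc1 dc2] := derivable_ncoord (derivable_gN dP dP) (derivable_gN dJP dP)
  (derivable_gN HW dP) (derivable_gN HW dJP) D0.
have Htan := is_deriveB HW (is_deriveD (is_derive_scale (derivableP dc1) dP)
                                       (is_derive_scale (derivableP dc2) dJP)).
have E := is_derive_val (is_derive_ext (g := fun q => tanproj Z0 q (W q)) (fun=> erefl) Htan).
by rewrite E; apply: gN_normal_comb.
Qed.

End NormalProjection.

Section GaussEquation.
Variables (R : realType) (n : nat) (Z0 : pt R n).
Local Notation V := (pt R n).

Lemma gN_derive_lieb (Y X Z : V -> V) p t : differentiable Y p ->
  gN ('D_(lieb X Z p) Y p) t = gN ('D_('D_(X p) Z p) Y p) t - gN ('D_('D_(Z p) X p) Y p) t.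
Proof. by move=> dY; rewrite !(deriveE _ dY) /lieb linearB gNBl. Qed.

(* The third-order terms cancel by [smooth_schwarz]; what remains is the
   normal part of the second derivatives, i.e. the Gauss equation. *)
Lemma gN_curv p t (X Y : V -> V) :
  smooth_field X -> smooth_field Y ->
  gN (p - Z0) (p - Z0) ^+ 2 + gN (Jop (p - Z0)) (p - Z0) ^+ 2 != 0 ->
  tangentv Z0 p t ->
  gN (curv Z0 X Y Y p) t =
    ncoord1 Z0 p ('D_(X p) Y p) * gN (Y p) t + ncoord2 Z0 p ('D_(X p) Y p) * gN (Jop (Y p)) t
  - (ncoord1 Z0 p ('D_(Y p) Y p) * gN (X p) t
     + ncoord2 Z0 p ('D_(Y p) Y p) * gN (Jop (X p)) t).
Proof.
move=> sX sY D0 tt.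
have dX q : differentiable X q by exact: smooth_differentiable.
have dY q : differentiable Y q by exact: smooth_differentiable.
have -> : gN (curv Z0 X Y Y p) t =
    gN ('D_(X p) (nabla Z0 Y Y) p) t - gN ('D_(Y p) (nabla Z0 X Y) p) t
    - gN ('D_(lieb X Y p) Y p) t.
  by rewrite /curv gNBl gNBl; congr (_ - _ - _); apply: gN_tanproj.
have eA : gN ('D_(X p) (nabla Z0 Y Y) p) t =
    gN ('D_('D_(X p) Y p) Y p) t + gN ('D_(Y p) (fun q => 'D_(X p) Y q) p) t
    - (ncoord1 Z0 p ('D_(Y p) Y p) * gN (X p) t
       + ncoord2 Z0 p ('D_(Y p) Y p) * gN (Jop (X p)) t).
  rewrite -gNDl; exact: gN_derive_tanproj D0 (is_derive_derive_along sY p (X p) dY) tt.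
have eB : gN ('D_(Y p) (nabla Z0 X Y) p) t =
    gN ('D_('D_(Y p) X p) Y p) t + gN ('D_(X p) (fun q => 'D_(Y p) Y q) p) t
    - (ncoord1 Z0 p ('D_(X p) Y p) * gN (Y p) t
       + ncoord2 Z0 p ('D_(X p) Y p) * gN (Jop (Y p)) t).
  rewrite -gNDl; exact: gN_derive_tanproj D0 (is_derive_derive_along sY p (Y p) dX) tt.
have eS : gN ('D_(Y p) (fun q => 'D_(X p) Y q) p) t =
          gN ('D_(X p) (fun q => 'D_(Y p) Y q) p) t.
  by rewrite (smooth_schwarz sY p (X p) (Y p)).
have combine (GA GB GC dA T1 dB T2 KA KB : R) : GA = dA + T1 - KA -> GB = dB + T2 - KB ->
    GC = dA - dB -> T1 = T2 -> GA - GB - GC = KB - KA.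
  by move=> -> -> -> ->; ring.
exact: combine eA eB (gN_derive_lieb _ _ _ (dY p)) eS.
Qed.

End GaussEquation.

Section RealFunctions.
Variable R : realType.
Implicit Types (f : R -> R) (x : R).

Lemma differentiable_sqrt f x : differentiable f x -> 0 < f x ->
  differentiable (fun t => Num.sqrt (f t)) x.
Proof.
move=> df fx0; apply: (@differentiable_comp _ _ _ _ f Num.sqrt) => //.
by apply/derivable1_diffP; case: (is_derive1_sqrt fx0).
Qed.

Lemma is_derive_even f : differentiable f 0 ->
  is_derive (0 : R) (1 : R) (fun t => f (t ^+ 2)) 0.
Proof.
move=> df.
have Hsq : is_derive (0 : R) (1 : R) (fun t : R => t ^+ 2) 0.
  have := is_deriveM (is_derive_id (0 : R) (1 : R)) (is_derive_id (0 : R) (1 : R)).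
  by rewrite /= scale0r addr0; apply: is_derive_ext => t; rewrite /= expr2.
have d1 : derivable (fun t : R => t ^+ 2) 0 1 by case: Hsq.
have d2 : derivable f ((fun t : R => t ^+ 2) 0) 1 by rewrite /= expr0n; exact: diff_derivable.
have H := derive1_comp d1 d2.
rewrite !derive1E (is_derive_val Hsq) mulr0 in H.
split; last exact: H.
apply/derivable1_diffP; apply: differentiable_comp; first exact/derivable1_diffP.
by rewrite /= expr0n.
Qed.

Lemma continuous_even f : differentiable f 0 ->
  {for (0 : R), continuous (fun t : R => f (t ^+ 2))}.
Proof.
by move=> df; apply/differentiable_continuous/derivable1_diffP; case: (is_derive_even df).
Qed.

Lemma near0_pos (g : R -> R) : {for 0, continuous g} -> 0 < g 0 ->
  \forall t \near (0 : R), 0 < g t.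
Proof.
move=> gc g0; have [d d0 Hd] := continuous_at_ball g0 gc.
apply/nbhs_ballP; exists d => // t; rewrite -ball_normE /= => ht.
by have := Hd t ht; rewrite ltr_norml; lra.
Qed.

Lemma differentiable_sqr (f : R -> R) x : differentiable f x ->
  differentiable (fun s => f s ^+ 2) x.
Proof.
move=> df; have -> : (fun s => f s ^+ 2) = f * f by apply/funext => s; rewrite expr2.
exact: differentiableM.
Qed.

Lemma differentiable_affine (c d : R) x : differentiable (fun s : R => c + s * d) x.
Proof.
apply: differentiableD; first exact: differentiable_cst.
apply: differentiableM; last exact: differentiable_cst.
by apply/derivable1_diffP; exact: derivable_id.
Qed.

(* The principal square root [r + i s' / (2 r)] of [u + i s'] with [m = |u + i s'|]. *)
Lemma csqrt_spec (u s' m r : R) : 0 <= m -> m ^+ 2 = u ^+ 2 + s' ^+ 2 -> 0 < m + u ->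
  0 <= r -> r ^+ 2 = (m + u) / 2 ->
  r ^+ 2 - (s' / (2 * r)) ^+ 2 = u /\ 2 * r * (s' / (2 * r)) = s'.
Proof.
move=> m0 hm mu r0 hr.
have r2 : 0 < r ^+ 2 by rewrite hr; lra.
have rn0 : r != 0 by apply/eqP => r00; move: r2; rewrite r00 expr0n ltxx.
split; last by field.
have mun0 : m + u != 0 by rewrite gt_eqF.
have hs : s' ^+ 2 = (m - u) * (m + u).
  have -> : (m - u) * (m + u) = m ^+ 2 - u ^+ 2 by ring.
  by rewrite hm; ring.
have -> : (s' / (2 * r)) ^+ 2 = s' ^+ 2 / (4 * r ^+ 2) by field.
by rewrite hr hs; field.
Qed.

End RealFunctions.

Section ComplexScaling.
Variables (R : realType) (n : nat).
Local Notation V := (pt R n).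

Lemma gN_cscale (Z : V) r s :
  gN (r *: Z - s *: Jop Z) (r *: Z - s *: Jop Z) =
    (r ^+ 2 - s ^+ 2) * gN Z Z - 2 * r * s * gN (Jop Z) Z /\
  gN (Jop (r *: Z - s *: Jop Z)) (r *: Z - s *: Jop Z) =
    (r ^+ 2 - s ^+ 2) * gN (Jop Z) Z + 2 * r * s * gN Z Z.
Proof.
rewrite JopB !JopZ JopK !(gNBl, gNDl, gNZl, gNNl, gNBr, gNDr, gNZr, gNNr) gN_JopJop.
by rewrite (gN_sym Z (Jop Z)); split; ring.
Qed.

Lemma gN_line (P v : V) t : gN P v = 0 -> gN (Jop P) v = 0 ->
  gN (P + t *: v) (P + t *: v) = gN P P + t ^+ 2 * gN v v /\
  gN (Jop (P + t *: v)) (P + t *: v) = gN (Jop P) P + t ^+ 2 * gN (Jop v) v.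
Proof.
move=> h1 h2.
have h3 : gN v P = 0 by rewrite gN_sym.
have h4 : gN (Jop v) P = 0 by rewrite gN_Jop gN_sym.
rewrite JopD JopZ !(gNDl, gNZl, gNDr, gNZr) h1 h2 h3 h4.
by split; ring.
Qed.

End ComplexScaling.

(* With q(Z) = g(Z,Z) + i g(JZ,Z), the complex number r + i s acting as
   Z |-> r Z - s JZ multiplies q by (r + i s)^2 ([gN_cscale]), and
   q(P + t v) = q(P) + t^2 q(v) for v tangent ([gN_line]).  Rescaling P + t v
   by the square root near 1 of w = q(P) / q(P + t v) therefore gives a curve
   on the h-sphere through p with velocity v.  Below, with s = t^2,
   [qre s + i qim s] is q(P + t v), [wre s + i wim s] is w and
   [sqre s + i sqim s] is its square root. *)
Section HCurve.
Variables (R : realType) (n : nat) (Z0 p v : pt R n).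
Local Notation V := (pt R n).
Hypothesis tv : tangentv Z0 p v.

Let a := gN (p - Z0) (p - Z0).
Let b := gN (Jop (p - Z0)) (p - Z0).
Hypothesis D0 : a ^+ 2 + b ^+ 2 != 0.

Let qre (s : R) := a + s * gN v v.
Let qim (s : R) := b + s * gN (Jop v) v.
Let qnorm (s : R) := qre s ^+ 2 + qim s ^+ 2.
Let wre (s : R) := (a * qre s + b * qim s) / qnorm s.
Let wim (s : R) := (b * qre s - a * qim s) / qnorm s.
Let wabs (s : R) := Num.sqrt (wre s ^+ 2 + wim s ^+ 2).
Let sqre (s : R) := Num.sqrt ((wabs s + wre s) / 2).
Let sqim (s : R) := wim s / (2 * sqre s).
Let line (t : R) := p - Z0 + t *: v.
Let hcurve (t : R) := Z0 + (sqre (t ^+ 2) *: line t - sqim (t ^+ 2) *: Jop (line t)).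

Lemma hcurve_on_hsphere t : qnorm (t ^+ 2) != 0 -> 0 < wabs (t ^+ 2) + wre (t ^+ 2) ->
  hsphere Z0 a b (hcurve t).
Proof.
move=> K0 L0; case: tv => h1 h2.
have [hA hB] := gN_line t h1 h2.
set r := sqre (t ^+ 2); set s' := wim (t ^+ 2); set u := wre (t ^+ 2).
set m := wabs (t ^+ 2).
have m0 : 0 <= m by exact: sqrtr_ge0.
have hm : m ^+ 2 = u ^+ 2 + s' ^+ 2 by rewrite sqr_sqrtr // addr_ge0 // sqr_ge0.
have r0 : 0 <= r by exact: sqrtr_ge0.
have hr : r ^+ 2 = (m + u) / 2 by rewrite sqr_sqrtr //; lra.
have [e1 e2] := csqrt_spec m0 hm L0 r0 hr.
have [q1 q2] := gN_cscale (line t) r (sqim (t ^+ 2)).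
rewrite /hsphere /gtN /= addrC addKr q1 q2 /line hA hB -/a -/b.
rewrite (_ : sqim (t ^+ 2) = s' / (2 * r)) // e1 e2 /u /s' /wre /wim.
by move: K0; rewrite /qnorm /qre /qim => K0; split; field.
Qed.

Lemma wre0 : wre 0 = 1.
Proof. by rewrite /wre /qnorm /qre /qim !mul0r !addr0; field. Qed.

Lemma wim0 : wim 0 = 0.
Proof. by rewrite /wim /qre /qim !mul0r !addr0 [b * a]mulrC subrr mul0r. Qed.

Lemma wabs0 : wabs 0 = 1.
Proof. by rewrite /wabs wre0 wim0 expr1n expr0n addr0 sqrtr1. Qed.

Lemma sqre0 : sqre 0 = 1.
Proof.
rewrite /sqre wabs0 wre0 (_ : (1 + 1) / 2 = 1) ?sqrtr1 //.
by rewrite divff // (_ : 1 + 1 = 2%:R) ?pnatr_eq0 // -natrD.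
Qed.

Lemma sqim0 : sqim 0 = 0.
Proof. by rewrite /sqim wim0 mul0r. Qed.

Lemma qnorm0 : qnorm 0 = a ^+ 2 + b ^+ 2.
Proof. by rewrite /qnorm /qre /qim !mul0r !addr0. Qed.

Lemma differentiable_qnorm x : differentiable qnorm x.
Proof. by apply: differentiableD; apply: differentiable_sqr; apply: differentiable_affine. Qed.

Lemma differentiable_wre : differentiable wre 0.
Proof.
apply: differentiableM; last first.
  by apply: differentiableV; [exact: differentiable_qnorm | rewrite qnorm0].
by apply: differentiableD; apply: differentiableM;
  (exact: differentiable_cst || exact: differentiable_affine).
Qed.

Lemma differentiable_wim : differentiable wim 0.
Proof.
apply: differentiableM; last first.
  by apply: differentiableV; [exact: differentiable_qnorm | rewrite qnorm0].
by apply: differentiableB; apply: differentiableM;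
  (exact: differentiable_cst || exact: differentiable_affine).
Qed.

Lemma differentiable_wabs : differentiable wabs 0.
Proof.
apply: differentiable_sqrt; last by rewrite wre0 wim0 expr1n expr0n addr0 ltr01.
by apply: differentiableD; apply: differentiable_sqr;
  [exact: differentiable_wre | exact: differentiable_wim].
Qed.

Lemma differentiable_sqre : differentiable sqre 0.
Proof.
apply: differentiable_sqrt; last by rewrite wabs0 wre0; lra.
apply: differentiableM; last exact: differentiable_cst.
by apply: differentiableD; [exact: differentiable_wabs | exact: differentiable_wre].
Qed.

Lemma differentiable_sqim : differentiable sqim 0.
Proof.
apply: differentiableM; first exact: differentiable_wim.
apply: differentiableV; last by rewrite sqre0 mulr1 pnatr_eq0.
by apply: differentiableM; [exact: differentiable_cst | exact: differentiable_sqre].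
Qed.

Lemma hcurve0 : hcurve 0 = p.
Proof.
by rewrite /hcurve expr0n sqre0 sqim0 scale0r subr0 scale1r /line scale0r addr0 addrC subrK.
Qed.

Lemma is_derive_hcurve : is_derive (0 : R) 1 hcurve v.
Proof.
have dline : is_derive (0 : R) 1 line v.
  have := is_deriveD (is_derive_cst (p - Z0) (0 : R) 1)
    (is_derive_scale (is_derive_id (0 : R) 1) (is_derive_cst v (0 : R) 1)).
  by rewrite scale1r scaler0 addr0 add0r; apply: is_derive_ext.
have := is_deriveD (is_derive_cst Z0 (0 : R) 1)
  (is_deriveB (is_derive_scale (is_derive_even differentiable_sqre) dline)
              (is_derive_scale (is_derive_even differentiable_sqim) (is_derive_Jop dline))).
rewrite /= expr0n sqre0 sqim0 !scale0r !add0r scale1r subr0.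
by apply: is_derive_ext.
Qed.

Lemma derive_vanishing_on_hsphere (f : V -> R) : differentiable f p ->
  (forall q, hsphere Z0 a b q -> f q = 0) -> 'D_v f p = 0.
Proof.
move=> df f0.
have dc : differentiable hcurve 0 by apply/derivable1_diffP; case: is_derive_hcurve.
have df' : differentiable f (hcurve 0) by rewrite hcurve0.
have N1 : \forall t \near (0 : R), 0 < qnorm (t ^+ 2).
  apply: near0_pos; first exact: continuous_even (differentiable_qnorm 0).
  by rewrite expr0n qnorm0 lt_def D0 addr_ge0 // sqr_ge0.
have dL : differentiable (fun s => wabs s + wre s) 0.
  by apply: differentiableD; [exact: differentiable_wabs | exact: differentiable_wre].
have N2 : \forall t \near (0 : R), 0 < wabs (t ^+ 2) + wre (t ^+ 2).
  by apply: near0_pos; [exact: continuous_even dL | rewrite expr0n wabs0 wre0; lra].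
have E : 'D_1 (f \o hcurve) 0 = 'D_1 (cst 0 : R -> R) 0.
  apply: near_eq_derive; apply: filterS2 N1 N2 => t k1 k2.
  by apply: f0; apply: hcurve_on_hsphere => //; rewrite gt_eqF.
rewrite derive_cst (deriveE _ (differentiable_comp dc df')) (diff_comp dc df') /= in E.
by rewrite -(deriveE _ dc) (is_derive_val is_derive_hcurve) hcurve0 -deriveE in E.
Qed.

End HCurve.

Lemma derive_eq0_on_hsphere (R : realType) (n : nat) (Z0 p v : pt R n) a b
    (f : pt R n -> R) :
  hsphere Z0 a b p -> a ^+ 2 + b ^+ 2 != 0 -> tangentv Z0 p v -> differentiable f p ->
  (forall q, hsphere Z0 a b q -> f q = 0) -> 'D_v f p = 0.
Proof.
move=> [ha hb]; rewrite /gtN in hb; rewrite -ha -hb => D0 tv df f0.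
by apply: (derive_vanishing_on_hsphere tv D0 df) => q /f0.
Qed.

Section HSphereCurvature.
Variables (R : realType) (n : nat) (Z0 : pt R n) (a b : R).
Local Notation V := (pt R n).
Hypothesis D0 : a ^+ 2 + b ^+ 2 != 0.

(* Differentiate [g(Y, P) = 0] and [g(Y, JP) = 0] along the h-sphere. *)
Lemma gN_derive_tangent_field p x (Y : V -> V) :
  hsphere Z0 a b p -> tangentv Z0 p x -> tangent_field Z0 a b Y ->
  gN ('D_x Y p) (p - Z0) = - gN (Y p) x /\
  gN ('D_x Y p) (Jop (p - Z0)) = - gN (Y p) (Jop x).
Proof.
move=> hp tx [sY tY].
have dY := smooth_differentiable sY.
have dP := is_derive_subr p x Z0.
have dP' := differentiable_subr p Z0.
have HY := differentiable_is_derive x (dY p).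
have E1 : 'D_x (fun q => gN (Y q) (q - Z0)) p = 0.
  apply: derive_eq0_on_hsphere hp D0 tx (differentiable_gN (dY p) dP') _ => q hq.
  by case: (tY q hq) => h _; rewrite gN_sym.
have E2 : 'D_x (fun q => gN (Y q) (Jop (q - Z0))) p = 0.
  apply: derive_eq0_on_hsphere hp D0 tx (differentiable_gN_Jop (dY p) dP') _ => q hq.
  by case: (tY q hq) => _ h; rewrite gN_sym.
rewrite (is_derive_val (is_derive_gN HY dP)) in E1.
rewrite (is_derive_val (is_derive_gN HY (is_derive_Jop dP))) in E2.
by split; apply/eqP; rewrite -addr_eq0; apply/eqP.
Qed.

Lemma gN_curv_hsphere p x y t (X Y : V -> V) :
  hsphere Z0 a b p -> tangent_field Z0 a b X -> tangent_field Z0 a b Y ->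
  X p = x -> Y p = y -> tangentv Z0 p t ->
  gN (curv Z0 X Y Y p) t =
   ((a * gN y y + b * gN y (Jop y)) * gN x t + (b * gN y y - a * gN y (Jop y)) * gN (Jop x) t
    - (a * gN y x + b * gN y (Jop x)) * gN y t - (b * gN y x - a * gN y (Jop x)) * gN (Jop y) t)
   / (a ^+ 2 + b ^+ 2).
Proof.
move=> hp tX tY Xp Yp tt.
have tx : tangentv Z0 p x by rewrite -Xp; case: tX => _; apply.
have ty : tangentv Z0 p y by rewrite -Yp; case: tY => _; apply.
have [ha hb] := hp; rewrite /gtN in hb.
have [Ex1 Ex2] := gN_derive_tangent_field hp tx tY.
have [Ey1 Ey2] := gN_derive_tangent_field hp ty tY.
rewrite (gN_curv tX.1 tY.1 _ tt); last by rewrite ha hb.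
rewrite Xp Yp /ncoord1 /ncoord2 /= Ex1 Ex2 Ey1 Ey2 Yp ha hb.
by field.
Qed.

End HSphereCurvature.

Theorem theorem3p2 (R : realType) (n : nat) (nu nut : R) (Z0 : pt R n) :
  (2 <= n)%N -> 0 < nu ^+ 2 + nut ^+ 2 ->
  const_totally_real_curv Z0 (nu / (nu ^+ 2 + nut ^+ 2))
    (- nut / (nu ^+ 2 + nut ^+ 2)) nu nut.
Proof.
(* [2 <= n] only ensures that nondegenerate totally real planes exist. *)
move=> _ S0 p x y hp tx _ pi0 [_ [rxx [_ [ryx ryy]]]] X Y tX tY Xp Yp.
have S0' : nu ^+ 2 + nut ^+ 2 != 0 by rewrite gt_eqF.
have D0 : (nu / (nu ^+ 2 + nut ^+ 2)) ^+ 2 + (- nut / (nu ^+ 2 + nut ^+ 2)) ^+ 2 != 0.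
  have -> : (nu / (nu ^+ 2 + nut ^+ 2)) ^+ 2 + (- nut / (nu ^+ 2 + nut ^+ 2)) ^+ 2 =
            (nu ^+ 2 + nut ^+ 2)^-1 by field.
  by rewrite invr_eq0.
have Jxx : gN (Jop x) x = 0 by rewrite gN_Jop.
have Jyx : gN (Jop y) x = 0 by rewrite gN_Jop.
have exy : gN x y = gN y x by rewrite gN_sym.
move: pi0; rewrite /pi1 exy => pi0.
split.
- rewrite (gN_curv_hsphere D0 hp tX tY Xp Yp tx) Jxx Jyx ryx ryy.
  by field; rewrite S0' pi0.
- rewrite (gN_curv_hsphere D0 hp tX tY Xp Yp (tangentv_Jop tx)) rxx ryx ryy.
  rewrite !gN_JopJop.
  by field; rewrite S0' pi0.
Qed.
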